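(* Let $M_1,M_2,M_3:\mathcal{L}_2^n\to\mathcal{L}_2^n$ be linear bounded invertible operators. For all $u,w\in\mathcal{L}_{2+}^n$ and all $v\in\mathcal{L}_{2+}^n\setminus\{0\}$, $$\theta_{M_1,M_3}(u,w)\le\theta_{M_1,M_2}(u,v)+\theta_{M_2,M_3}(v,w).$$
   Context: $\mathcal{L}_2^n$ is the Hilbert space of measurable $u:\mathbb{R}\to\mathbb{R}^n$ with $\|u\|_2^2=\int|u(t)|^2dt<\infty$ and inner product $\langle u,v\rangle=\int u(t)^Tv(t)\,dt$; $\mathcal{L}_{2+}=\{u\in\mathcal{L}_2:u(t)=0\ \text{for}\ t<0\}$. For linear bounded invertible $M_1,M_2$ on $\mathcal{L}_2$ and $u,v\in\mathcal{L}_{2+}$, the generalized angle $\theta_{M_1,M_2}(u,v)\in[0,\pi]$ is defined by $\cos\theta_{M_1,M_2}(u,v)=\langle M_1u,M_2v\rangle/(\|M_1u\|_2\|M_2v\|_2)$ if $u,v\ne0$, and $\theta_{M_1,M_2}(u,v)=0$ otherwise. *)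

From HB Require Import structures.
From mathcomp Require Import all_boot all_order all_algebra.
From mathcomp Require Import all_classical all_reals all_analysis.
Set Implicit Arguments. Unset Strict Implicit. Unset Printing Implicit Defensive.
Import Order.TTheory GRing.Theory Num.Theory.
Local Open Scope ring_scope.

Definition sig (R : realType) (n : nat) := R -> 'I_n -> R.

Section L2.
Variables (R : realType) (n : nat).

Definition L2 (u : sig R n) : Prop :=
  (forall i : 'I_n, measurable_fun setT (fun t => u t i)) /\
  (\int[lebesgue_measure]_(t in setT) ((\sum_(i < n) (u t i) ^+ 2)%:E) < +oo)%E.

Definition L2plus (u : sig R n) : Prop :=
  L2 u /\ (forall t, t < 0 -> forall i, u t i = 0).

Definition inner (u v : sig R n) : R :=
  Rintegral lebesgue_measure setT (fun t => \sum_(i < n) u t i * v t i).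

Definition norm2 (u : sig R n) : R := Num.sqrt (inner u u).

Definition sig_add (u v : sig R n) : sig R n := fun t i => u t i + v t i.
Definition sig_scale (a : R) (u : sig R n) : sig R n := fun t i => a * u t i.
Definition sig_sub (u v : sig R n) : sig R n := fun t i => u t i - v t i.

Definition L2eq (u v : sig R n) : Prop := norm2 (sig_sub u v) = 0.

(* M is a linear, bounded, invertible operator on L_2^n.  Elements of L_2 are
   equivalence classes, so all identities are up to L2eq. *)
Definition lbi_operator (M : sig R n -> sig R n) : Prop :=
  (forall u, L2 u -> L2 (M u)) /\
  (forall u v, L2 u -> L2 v -> L2eq u v -> L2eq (M u) (M v)) /\
  (forall a b u v, L2 u -> L2 v ->
     L2eq (M (sig_add (sig_scale a u) (sig_scale b v)))
          (sig_add (sig_scale a (M u)) (sig_scale b (M v)))) /\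
  (exists C : R, forall u, L2 u -> norm2 (M u) <= C * norm2 u) /\
  (forall u, L2 u -> L2eq (M u) (fun _ _ => 0) -> L2eq u (fun _ _ => 0)) /\
  (forall w, L2 w -> exists u, L2 u /\ L2eq (M u) w).

Definition gangle (M1 M2 : sig R n -> sig R n) (u v : sig R n) : R :=
  if `[< norm2 u <> 0 /\ norm2 v <> 0 >] then
    acos (inner (M1 u) (M2 v) / (norm2 (M1 u) * norm2 (M2 v)))
  else 0.

End L2.

(* The three signals x = M1 u, y = M2 v, z = M3 w have a positive semidefinite
   Gram matrix, because it is the Gram matrix of an inner product.  Normalizing
   its diagonal to 1 gives a correlation matrix with entries P = cos a,
   Q = cos b, S = cos c, and nonnegativity of its Schur complement forces
   S >= P Q - sqrt (1 - P^2) sqrt (1 - Q^2) = cos (a + b).  Since cos is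
   decreasing on [0, pi], this yields c <= a + b.  Injectivity of the M_i
   makes the diagonal entries positive whenever u, v, w are nonzero. *)
From HB Require Import structures.
From mathcomp Require Import all_boot all_order all_algebra.
From mathcomp Require Import all_classical all_reals all_analysis.
From mathcomp Require Import measurable_realfun ring lra.
Import Order.TTheory GRing.Theory Num.Theory.
Local Open Scope ring_scope.
Set Implicit Arguments. Unset Strict Implicit.

Section GramAngle.
Variable R : realType.
Implicit Types A B C p q r P Q S : R.

Definition psd2 A B p := forall a b : R, 0 <= a ^+ 2 * A + b ^+ 2 * B + 2 * a * b * p.

Definition gram_form3 A B C p q r (a b c : R) :=
  a ^+ 2 * A + b ^+ 2 * B + c ^+ 2 * C + 2 * a * b * p + 2 * a * c * r + 2 * b * c * q.

Definition psd3 A B C p q r := forall a b c : R, 0 <= gram_form3 A B C p q r a b c.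

Lemma psd3_psd2 A B C p q r : psd3 A B C p q r -> psd2 A B p.
Proof. by move=> U a b; have := U a b 0; rewrite /gram_form3; congr (_ <= _); ring. Qed.

Lemma psd2_det_ge0 A B p : psd2 A B p -> p ^+ 2 <= A * B.
Proof.
move=> U; have UA := U 1 0; have UB := U 0 1.
have [A0|A0] := ltrP 0 A; first by have := U p (- A); nra.
have -> : A = 0 by apply/le_anti; rewrite A0; nra.
by have := U (B + 1) (- p); nra.
Qed.

Lemma psd2_cos_bound A B p : 0 < A -> 0 < B -> psd2 A B p ->
  -1 <= p / (Num.sqrt A * Num.sqrt B) <= 1.
Proof.
move=> A0 B0 /psd2_det_ge0.
have s0 : 0 < Num.sqrt A * Num.sqrt B by rewrite mulr_gt0 ?sqrtr_gt0.
have <- : (Num.sqrt A * Num.sqrt B) ^+ 2 = A * B.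
  by rewrite exprMn !sqr_sqrtr ?ltW.
move: s0; set s := _ * _ => s0.
rewrite -{1}(divfK (lt0r_neq0 s0) p); set P := p / s => Ps.
have P1 : P ^+ 2 <= 1 by rewrite -(ler_pM2r (exprn_gt0 2 s0)) mul1r -exprMn.
by apply/andP; split; nra.
Qed.

Lemma psd3_normalize A B C p q r : 0 < A -> 0 < B -> 0 < C ->
  psd3 A B C p q r ->
  psd3 1 1 1 (p / (Num.sqrt A * Num.sqrt B)) (q / (Num.sqrt B * Num.sqrt C))
             (r / (Num.sqrt A * Num.sqrt C)).
Proof.
move=> A0 B0 C0 U a b c.
have := U (a / Num.sqrt A) (b / Num.sqrt B) (c / Num.sqrt C).
have nA : Num.sqrt A != 0 by rewrite gt_eqF ?sqrtr_gt0.
have nB : Num.sqrt B != 0 by rewrite gt_eqF ?sqrtr_gt0.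
have nC : Num.sqrt C != 0 by rewrite gt_eqF ?sqrtr_gt0.
move: (sqr_sqrtr (ltW A0)) (sqr_sqrtr (ltW B0)) (sqr_sqrtr (ltW C0)) nA nB nC.
generalize (Num.sqrt A) (Num.sqrt B) (Num.sqrt C) => sA sB sC <- <- <- nA nB nC.
rewrite /gram_form3.
by congr (_ <= _); field; rewrite nA nB nC.
Qed.

Lemma psd3_unit_bounds P Q S : psd3 1 1 1 P Q S ->
  [/\ -1 <= P <= 1, -1 <= Q <= 1 & -1 <= S <= 1].
Proof.
move=> U; rewrite /psd3 /gram_form3 in U.
have := U 1 1 0; have := U 1 (-1) 0; have := U 0 1 1.
have := U 0 1 (-1); have := U 1 0 1; have := U 1 0 (-1).
by move=> *; split; apply/andP; split; nra.
Qed.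

(* The Schur complement of the middle diagonal entry. *)
Lemma psd3_unit_schur P Q S : psd3 1 1 1 P Q S ->
  psd2 (1 - P ^+ 2) (1 - Q ^+ 2) (S - P * Q).
Proof. by move=> U l m; have := U l (- l * P - m * Q) m; rewrite /gram_form3; nra. Qed.

Lemma psd3_unit_cos_lower P Q S : psd3 1 1 1 P Q S ->
  P * Q - Num.sqrt (1 - P ^+ 2) * Num.sqrt (1 - Q ^+ 2) <= S.
Proof.
move=> U; have [dP dQ _] := psd3_unit_bounds U.
have X0 : 0 <= 1 - P ^+ 2 by nra.
have Z0 : 0 <= 1 - Q ^+ 2 by nra.
have det := psd2_det_ge0 (psd3_unit_schur U).
have s0 : 0 <= Num.sqrt (1 - P ^+ 2) * Num.sqrt (1 - Q ^+ 2) by rewrite mulr_ge0.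
have s2 : (Num.sqrt (1 - P ^+ 2) * Num.sqrt (1 - Q ^+ 2)) ^+ 2
          = (1 - P ^+ 2) * (1 - Q ^+ 2) by rewrite exprMn !sqr_sqrtr.
nra.
Qed.

Lemma acos_le_addr P Q S : -1 <= P <= 1 -> -1 <= Q <= 1 -> -1 <= S <= 1 ->
  cos (acos P + acos Q) <= S -> acos S <= acos P + acos Q.
Proof.
move=> dP dQ dS cS.
have [a0 api] := (acos_ge0 dP, acos_lepi dP).
have [b0 bpi] := (acos_ge0 dQ, acos_lepi dQ).
have [c0 cpi] := (acos_ge0 dS, acos_lepi dS).
have [le|] := lerP (acos P + acos Q) pi; last by lra.
rewrite leNgt; apply/negP => lt.
have := @ltr_cos R (acos P + acos Q) (acos S).
rewrite !in_itv /= le cpi c0 addr_ge0 // acosK ?in_itv // => /(_ isT isT).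
by rewrite lt; lra.
Qed.

Lemma psd3_unit_acos_triangle P Q S : psd3 1 1 1 P Q S ->
  acos S <= acos P + acos Q.
Proof.
move=> U; have [dP dQ dS] := psd3_unit_bounds U.
apply: acos_le_addr => //.
rewrite cosD !acosK ?in_itv //= !sin_acos //.
exact: psd3_unit_cos_lower.
Qed.

Lemma psd3_acos_triangle A B C p q r : 0 < A -> 0 < B -> 0 < C ->
  psd3 A B C p q r ->
  acos (r / (Num.sqrt A * Num.sqrt C)) <=
  acos (p / (Num.sqrt A * Num.sqrt B)) + acos (q / (Num.sqrt B * Num.sqrt C)).
Proof. by move=> A0 B0 C0 /psd3_normalize-/(_ A0 B0 C0)/psd3_unit_acos_triangle. Qed.

End GramAngle.

Section SignalGram.
Variables (R : realType) (n : nat).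
Local Notation mu := (@lebesgue_measure R).
Local Notation integrableR f := (mu.-integrable setT (EFin \o f)).
Implicit Types x y z : sig R n.

Definition sig_dot x y : R -> R := fun t => \sum_(i < n) x t i * y t i.

Lemma integrableRD (f g : R -> R) :
  integrableR f -> integrableR g -> integrableR (fun t => f t + g t).
Proof. by move=> hf hg; apply: eq_integrable (integrableD _ hf hg). Qed.

Lemma integrableRZl c (f : R -> R) :
  integrableR f -> integrableR (fun t => c * f t).
Proof. by move=> hf; apply: eq_integrable (integrableZl _ c hf). Qed.

Lemma measurable_sig_dot x y : L2 x -> L2 y -> measurable_fun setT (sig_dot x y).
Proof. by move=> [mx _] [my _]; apply: measurable_sum => i; apply: measurable_funM. Qed.

Lemma sig_dot_self_ge0 x t : 0 <= sig_dot x x t.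
Proof. by apply: sumr_ge0 => i _; rewrite -expr2 sqr_ge0. Qed.

Lemma integrable_sig_dot_self x : L2 x -> integrableR (sig_dot x x).
Proof.
move=> hx; have mx := measurable_sig_dot hx hx.
case: hx => _ fin; apply/integrableP; split; first exact/measurable_EFinP.
apply: le_lt_trans fin; rewrite le_eqVlt; apply/orP; left; apply/eqP.
by apply: eq_integral => t _ /=; rewrite ger0_norm ?sig_dot_self_ge0.
Qed.

(* |x . y| <= x . x + y . y pointwise, coordinatewise from 2|ab| <= a^2 + b^2. *)
Lemma integrable_sig_dot x y : L2 x -> L2 y -> integrableR (sig_dot x y).
Proof.
move=> hx hy; apply: (le_integrable measurableT _ _
  (integrableRD (integrable_sig_dot_self hx) (integrable_sig_dot_self hy))).
  by apply/measurable_EFinP; exact: measurable_sig_dot.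
move=> t _ /=; rewrite lee_fin [X in _ <= X]ger0_norm ?addr_ge0 ?sig_dot_self_ge0 //.
rewrite ler_norml /sig_dot -big_split /= -sumrN; apply/andP; split;
  by apply: ler_sum => i _; nra.
Qed.

Lemma inner_ge0 x : 0 <= inner x x.
Proof. by apply: Rintegral_ge0 => t _; apply: sig_dot_self_ge0. Qed.

Lemma inner_gram_psd3 x y z : L2 x -> L2 y -> L2 z ->
  psd3 (inner x x) (inner y y) (inner z z) (inner x y) (inner y z) (inner x z).
Proof.
move=> hx hy hz a b c.
have -> : gram_form3 (inner x x) (inner y y) (inner z z) (inner x y) (inner y z)
    (inner x z) a b c = Rintegral mu setT (fun t => gram_form3 (sig_dot x x t)
    (sig_dot y y t) (sig_dot z z t) (sig_dot x y t) (sig_dot y z t) (sig_dot x z t) a b c).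
  rewrite /gram_form3 !RintegralD // ?RintegralZl //; do ?[apply: integrableRD |
    apply: integrableRZl | by apply: integrable_sig_dot].
apply: Rintegral_ge0 => t _.
have -> : gram_form3 (sig_dot x x t) (sig_dot y y t) (sig_dot z z t)
    (sig_dot x y t) (sig_dot y z t) (sig_dot x z t) a b c
    = \sum_(i < n) (a * x t i + b * y t i + c * z t i) ^+ 2.
  by rewrite /gram_form3 /sig_dot !mulr_sumr -!big_split /=; apply: eq_bigr => i _; ring.
by apply: sumr_ge0 => i _; apply: sqr_ge0.
Qed.

Lemma lbi_inner_gt0 (M : sig R n -> sig R n) x :
  lbi_operator M -> L2 x -> norm2 x <> 0 -> 0 < inner (M x) (M x).
Proof.
move=> [_ [_ [_ [_ [inj _]]]]] hx nx.
rewrite lt_def inner_ge0 andbT; apply/eqP => M0; apply: nx.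
have sub0 (f : sig R n) : sig_sub f (fun _ _ => 0) = f.
  by apply/funext => t; apply/funext => i; rewrite /sig_sub subr0.
by have := inj x hx; rewrite /L2eq !sub0 /norm2 M0 sqrtr0; apply.
Qed.

Lemma gangle_ge0 (M M' : sig R n -> sig R n) x y :
  lbi_operator M -> lbi_operator M' -> L2 x -> L2 y -> 0 <= gangle M M' x y.
Proof.
move=> hM hM' hx hy; rewrite /gangle; case: asboolP => // -[nx ny].
apply/acos_ge0/psd2_cos_bound; [exact: lbi_inner_gt0 ..|].
exact/psd3_psd2/inner_gram_psd3/(hM'.1 _ hy)/(hM'.1 _ hy)/(hM.1 _ hx).
Qed.

End SignalGram.

Unset Implicit Arguments.
Theorem lemma4 (R : realType) (n : nat) (M1 M2 M3 : sig R n -> sig R n) :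
  lbi_operator M1 -> lbi_operator M2 -> lbi_operator M3 ->
  forall u v w : sig R n,
    L2plus u -> L2plus w -> L2plus v -> norm2 v <> 0 ->
    gangle M1 M3 u w <= gangle M1 M2 u v + gangle M2 M3 v w.
Proof.
move=> h1 h2 h3 u v w [hu _] [hw _] [hv _] nv.
rewrite {1}/gangle; case: asboolP => [[nu nw]|_]; last first.
  by rewrite addr_ge0 ?(gangle_ge0 h1 h2) ?(gangle_ge0 h2 h3).
rewrite /gangle !asboolT //.
apply: psd3_acos_triangle; [exact: lbi_inner_gt0 ..|].
exact: inner_gram_psd3 (h1.1 _ hu) (h2.1 _ hv) (h3.1 _ hw).
Qed.
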